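(* Let $G$ be a nilpotent group in which every non-abelian subgroup $H$ satisfies $C_G(H)\le H$. Then $G$ is abelian or finite.
   Context: $C_G(H)$ denotes the centralizer of $H$ in $G$. The class of groups in which every non-abelian subgroup contains its own centralizer is denoted $\mathfrak A$ in the paper. *)

From Stdlib Require Import List.
Set Implicit Arguments.

Record is_group (T : Type) (mul : T -> T -> T) (one : T) (inv : T -> T) : Prop := {
  grp_assoc : forall x y z, mul x (mul y z) = mul (mul x y) z;
  grp_mul1l : forall x, mul one x = x;
  grp_mul1r : forall x, mul x one = x;
  grp_mulVl : forall x, mul (inv x) x = one;
  grp_mulVr : forall x, mul x (inv x) = one
}.

Definition is_subgroup (T : Type) (mul : T -> T -> T) (one : T) (inv : T -> T)
  (H : T -> Prop) : Prop :=
  H one /\ (forall x y, H x -> H y -> H (mul x y)) /\ (forall x, H x -> H (inv x)).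

Definition abelian_set (T : Type) (mul : T -> T -> T) (H : T -> Prop) : Prop :=
  forall x y, H x -> H y -> mul x y = mul y x.

Definition abelian_group (T : Type) (mul : T -> T -> T) : Prop :=
  forall x y : T, mul x y = mul y x.

Definition centralizer (T : Type) (mul : T -> T -> T) (H : T -> Prop) : T -> Prop :=
  fun g => forall h, H h -> mul g h = mul h g.

Definition comm (T : Type) (mul : T -> T -> T) (inv : T -> T) (x y : T) : T :=
  mul (mul (inv x) (inv y)) (mul x y).

(* upper central series: Z_0 = 1, Z_{i+1} = { x | [x, y] \in Z_i for all y },
   i.e. Z_{i+1}/Z_i = Z(G/Z_i). *)
Fixpoint upper_central (T : Type) (mul : T -> T -> T) (one : T) (inv : T -> T)
  (n : nat) : T -> Prop :=
  match n with
  | O => fun x => x = one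
  | S m => fun x => forall y, upper_central mul one inv m (comm mul inv x y)
  end.

Definition nilpotent_group (T : Type) (mul : T -> T -> T) (one : T) (inv : T -> T) : Prop :=
  exists n, forall x, upper_central mul one inv n x.

Definition finite_group (T : Type) : Prop :=
  exists l : list T, forall x, In x l.

From Stdlib Require Import ZArith Lia List Classical.
Open Scope Z_scope.

(* If G is not abelian, nilpotency gives x, y whose commutator c <> 1 is central.
   The words x^a y^b c^k then multiply by
     x^a y^b c^k * x^a' y^b' c^k' = x^(a+a') y^(b+b') c^(k+k'-ba'),
   so for L | NM the words with exponents in NZ, MZ, LZ form a subgroup
   <x^N, y^M, c^L>, non-abelian as soon as c^(NM) <> 1.  Since non-abelian
   subgroups contain their centralizers, suitable choices of N, M, L force c, and
   then x and y, to have finite order; hence H = <x, y> is finite with C_G(H) <= H.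
   Finally g |-> ([g, h])_(h in H) maps Z_(i+1) into the finitely many H-tuples
   over Z_i, with fibres inside cosets of C_G(H), so every Z_i, and thus G, is
   finite. *)

Definition finite_on {A : Type} (Q : A -> Prop) : Prop :=
  exists l, forall a, Q a -> In a l.

Lemma finite_on_fibers {A B : Type} (Q : A -> Prop) (F : A -> B) (Ls : list B)
    (fiber : A -> list A) :
  (forall a, Q a -> In (F a) Ls) ->
  (forall a a', Q a -> Q a' -> F a = F a' -> In a' (fiber a)) ->
  finite_on Q.
Proof.
  revert Q; induction Ls as [|L Ls IH]; intros Q HF Hfiber.
  - exists nil; intros a Ha; destruct (HF a Ha).
  - destruct (IH (fun a => Q a /\ F a <> L)) as [l Hl].
    + intros a [Ha HaL]; destruct (HF a Ha) as [E|E]; [congruence|exact E].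
    + intros a a' [Ha _] [Ha' _]; exact (Hfiber a a' Ha Ha').
    + destruct (classic (exists a0, Q a0 /\ F a0 = L)) as [[a0 [Ha0 E0]]|Hnone].
      * exists (fiber a0 ++ l); intros a Ha; apply in_or_app.
        destruct (classic (F a = L)) as [E|E].
        -- left; apply Hfiber; congruence.
        -- right; apply Hl; auto.
      * exists l; intros a Ha; apply Hl; split; [exact Ha|].
        intro E; apply Hnone; exists a; auto.
Qed.

Fixpoint tuples {A : Type} (l : list A) (n : nat) : list (list A) :=
  match n with
  | O => nil :: nil
  | S n => flat_map (fun a => map (cons a) (tuples l n)) l
  end.

Lemma tuples_complete {A : Type} (l L : list A) :
  (forall a, In a L -> In a l) -> In L (tuples l (length L)).
Proof.
  induction L as [|a L IH]; intro HL; simpl.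
  - left; reflexivity.
  - apply in_flat_map; exists a; split; [apply HL; left; reflexivity|].
    apply in_map, IH; intros b Hb; apply HL; right; exact Hb.
Qed.

Definition zrange (m : Z) : list Z := map Z.of_nat (seq 0 (Z.to_nat m)).

Lemma in_zrange_mod a m : 0 < m -> In (a mod m) (zrange m).
Proof.
  intro Hm; assert (Hb := Z.mod_pos_bound a m Hm).
  apply in_map_iff; exists (Z.to_nat (a mod m)); split.
  - apply Z2Nat.id; lia.
  - apply in_seq; lia.
Qed.

Lemma succ_multiple_neq0 N m : 2 <= N -> 1 + N * m <> 0.
Proof. intros HN E; destruct (Z.le_gt_cases 0 m); nia. Qed.

Section Group.
Variables (T : Type) (mul : T -> T -> T) (one : T) (inv : T -> T).
Hypothesis HG : is_group mul one inv.
Local Infix "⋅" := mul (at level 40, left associativity).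
Local Notation "[~ a , b ]" := (comm mul inv a b).

Lemma mulA x y z : x ⋅ (y ⋅ z) = x ⋅ y ⋅ z. Proof. apply (grp_assoc HG). Qed.
Lemma mul1l x : one ⋅ x = x. Proof. apply (grp_mul1l HG). Qed.
Lemma mul1r x : x ⋅ one = x. Proof. apply (grp_mul1r HG). Qed.
Lemma mulVl x : inv x ⋅ x = one. Proof. apply (grp_mulVl HG). Qed.
Lemma mulVr x : x ⋅ inv x = one. Proof. apply (grp_mulVr HG). Qed.

Lemma mulKV a x : a ⋅ x ⋅ inv x = a.
Proof. rewrite <- mulA, mulVr, mul1r; reflexivity. Qed.
Lemma mulVK a x : a ⋅ inv x ⋅ x = a.
Proof. rewrite <- mulA, mulVl, mul1r; reflexivity. Qed.
Lemma mulKl x y : inv x ⋅ (x ⋅ y) = y.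
Proof. rewrite mulA, mulVl, mul1l; reflexivity. Qed.

Lemma mul_cancel_l x y z : x ⋅ y = x ⋅ z -> y = z.
Proof. intro E; rewrite <- (mulKl x y), E, mulKl; reflexivity. Qed.
Lemma mul_cancel_r x y z : y ⋅ x = z ⋅ x -> y = z.
Proof. intro E; rewrite <- (mulKV y x), E, mulKV; reflexivity. Qed.

Lemma inv_unique x y : x ⋅ y = one -> y = inv x.
Proof. intro E; apply (mul_cancel_l x); rewrite E, mulVr; reflexivity. Qed.
Lemma invK x : inv (inv x) = x.
Proof. symmetry; apply inv_unique, mulVl. Qed.
Lemma inv_mul x y : inv (x ⋅ y) = inv y ⋅ inv x.
Proof. symmetry; apply inv_unique; rewrite !mulA, mulKV, mulVr; reflexivity. Qed.
Lemma inv_one : inv one = one.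
Proof. symmetry; apply inv_unique, mul1l. Qed.

Lemma commute_inv a h : a ⋅ inv h = inv h ⋅ a -> a ⋅ h = h ⋅ a.
Proof.
  intro E; apply (mul_cancel_l (inv h)).
  rewrite mulA, <- E, mulVK, mulKl; reflexivity.
Qed.

Lemma comm_eq_one a b : [~ a, b] = one <-> a ⋅ b = b ⋅ a.
Proof.
  unfold comm; split; intro E.
  - apply inv_unique in E; rewrite E, inv_mul, !invK; reflexivity.
  - rewrite E, !mulA, mulVK, mulVl; reflexivity.
Qed.

Lemma comm_eq_commute g g' h :
  [~ g, h] = [~ g', h] -> (g' ⋅ inv g) ⋅ h = h ⋅ (g' ⋅ inv g).
Proof.
  unfold comm; intro E; rewrite !mulA in E; apply mul_cancel_r in E.
  apply commute_inv.
  transitivity (g' ⋅ (inv g ⋅ inv h ⋅ g) ⋅ inv g).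
  - rewrite !mulA, mulKV; reflexivity.
  - rewrite E, !mulA, mulVr, mul1l; reflexivity.
Qed.

Fixpoint npow (x : T) (n : nat) : T :=
  match n with O => one | S m => npow x m ⋅ x end.

Definition zpow (x : T) (z : Z) : T :=
  if z >=? 0 then npow x (Z.to_nat z) else npow (inv x) (Z.to_nat (- z)).

Lemma zpow0 x : zpow x 0 = one. Proof. reflexivity. Qed.

Lemma zpow_succ x z : zpow x (z + 1) = zpow x z ⋅ x.
Proof.
  unfold zpow; destruct (Z.geb_spec z 0).
  - destruct (Z.geb_spec (z + 1) 0); [|lia].
    replace (Z.to_nat (z + 1)) with (S (Z.to_nat z)) by lia; reflexivity.
  - destruct (Z.eq_dec z (-1)) as [->|Hz].
    + simpl; rewrite mul1l, mulVl; reflexivity.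
    + destruct (Z.geb_spec (z + 1) 0); [lia|].
      replace (Z.to_nat (- z)) with (S (Z.to_nat (- (z + 1)))) by lia.
      simpl; rewrite mulVK; reflexivity.
Qed.

Lemma zpow1 x : zpow x 1 = x.
Proof. change 1 with (0 + 1); rewrite zpow_succ, zpow0, mul1l; reflexivity. Qed.

Lemma zpow_pred x z : zpow x (z - 1) = zpow x z ⋅ inv x.
Proof.
  replace (zpow x z) with (zpow x (z - 1 + 1)) by (f_equal; lia).
  rewrite zpow_succ, mulKV; reflexivity.
Qed.

Lemma zpowD x a b : zpow x (a + b) = zpow x a ⋅ zpow x b.
Proof.
  induction b using Z.peano_ind.
  - rewrite Z.add_0_r, zpow0, mul1r; reflexivity.
  - rewrite <- !Z.add_1_r, Z.add_assoc, !zpow_succ, IHb, mulA; reflexivity.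
  - rewrite <- !Z.sub_1_r, Z.add_sub_assoc, !zpow_pred, IHb, mulA; reflexivity.
Qed.

Lemma zpowN x a : zpow x (- a) = inv (zpow x a).
Proof.
  apply inv_unique; rewrite <- zpowD, Z.add_opp_diag_r; reflexivity.
Qed.

Lemma zpowM x a b : zpow x (a * b) = zpow (zpow x a) b.
Proof.
  induction b using Z.peano_ind.
  - rewrite Z.mul_0_r; reflexivity.
  - rewrite <- Z.add_1_r, Z.mul_add_distr_l, Z.mul_1_r, zpowD, zpow_succ, IHb.
    reflexivity.
  - rewrite <- Z.sub_1_r, zpow_pred, <- IHb.
    replace (a * (b - 1)) with (a * b + - a) by lia.
    rewrite zpowD, zpowN; reflexivity.
Qed.

Lemma zpow_one a : zpow one a = one.
Proof.
  induction a using Z.peano_ind.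
  - reflexivity.
  - rewrite <- Z.add_1_r, zpow_succ, IHa, mul1l; reflexivity.
  - rewrite <- Z.sub_1_r, zpow_pred, IHa, inv_one, mul1l; reflexivity.
Qed.

Lemma zpow_sub_eq_one g m n : zpow g m = zpow g n -> zpow g (m - n) = one.
Proof.
  intro E; rewrite <- Z.add_opp_r, zpowD, zpowN, E, mulVr; reflexivity.
Qed.

Lemma zpow_multiple_one g o t : zpow g o = one -> zpow g (o * t) = one.
Proof. intro E; rewrite zpowM, E, zpow_one; reflexivity. Qed.

Lemma zpow_mod g m a : 0 < m -> zpow g m = one -> zpow g a = zpow g (a mod m).
Proof.
  intros Hm E; rewrite (Z.div_mod a m) at 1 by lia.
  rewrite zpowD, zpow_multiple_one, mul1l by exact E; reflexivity.
Qed.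

Lemma zpow_abs_one g n : zpow g n = one -> zpow g (Z.abs n) = one.
Proof.
  intro E; destruct (Z.abs_spec n) as [[_ ->]|[_ ->]]; [exact E|].
  rewrite zpowN, E, inv_one; reflexivity.
Qed.

Lemma zpow_order_from g h d K o :
  zpow g d = zpow h K -> zpow h o = one -> zpow g (d * o) = one.
Proof.
  intros Eg Eh; rewrite zpowM, Eg, <- zpowM, Z.mul_comm.
  apply zpow_multiple_one, Eh.
Qed.

Definition central (z : T) : Prop := forall g, z ⋅ g = g ⋅ z.

Lemma central_inv z : central z -> central (inv z).
Proof.
  intros Hz g; apply (mul_cancel_l z).
  rewrite mulA, mulVr, mul1l, mulA, Hz, mulKV; reflexivity.
Qed.

Lemma central_zpow z a : central z -> central (zpow z a).
Proof.
  intro Hz; induction a using Z.peano_ind; intro g.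
  - rewrite zpow0, mul1l, mul1r; reflexivity.
  - rewrite <- Z.add_1_r, zpow_succ, <- mulA, Hz, mulA, IHa, <- mulA; reflexivity.
  - rewrite <- Z.sub_1_r, zpow_pred, <- mulA, (central_inv z Hz), mulA, IHa, <- mulA.
    reflexivity.
Qed.

Lemma central_swap a z b : central z -> a ⋅ z ⋅ b = a ⋅ b ⋅ z.
Proof. intro Hz; rewrite <- mulA, Hz, mulA; reflexivity. Qed.

Lemma zpow_mul_central x z a : central z -> zpow (x ⋅ z) a = zpow x a ⋅ zpow z a.
Proof.
  intro Hz; induction a using Z.peano_ind.
  - rewrite !zpow0, mul1l; reflexivity.
  - rewrite <- Z.add_1_r, !zpow_succ, IHa, !mulA.
    rewrite (central_swap (zpow x a) (zpow z a) x (central_zpow z a Hz)).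
    reflexivity.
  - rewrite <- Z.sub_1_r, !zpow_pred, IHa, inv_mul, (central_inv z Hz (inv x)), !mulA.
    rewrite (central_swap (zpow x a) (zpow z a) (inv x) (central_zpow z a Hz)).
    reflexivity.
Qed.

Definition conj (g u : T) : T := inv g ⋅ u ⋅ g.

Lemma conj1 u : conj one u = u.
Proof. unfold conj; rewrite inv_one, mul1l, mul1r; reflexivity. Qed.
Lemma conjM g h u : conj (g ⋅ h) u = conj h (conj g u).
Proof. unfold conj; rewrite inv_mul, !mulA; reflexivity. Qed.
Lemma conjVK g u : conj (inv g) (conj g u) = u.
Proof. rewrite <- conjM, mulVr, conj1; reflexivity. Qed.
Lemma conj_mul g u v : conj g (u ⋅ v) = conj g u ⋅ conj g v.
Proof. unfold conj; rewrite !mulA, mulKV; reflexivity. Qed.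
Lemma conj_inv g u : conj g (inv u) = inv (conj g u).
Proof. unfold conj; rewrite !inv_mul, invK, !mulA; reflexivity. Qed.
Lemma conj_central g z : central z -> conj g z = z.
Proof. intro Hz; unfold conj; rewrite <- Hz, mulVK; reflexivity. Qed.

Lemma conj_zpow g u a : conj g (zpow u a) = zpow (conj g u) a.
Proof.
  induction a using Z.peano_ind.
  - rewrite !zpow0; apply conj_central; intro h; rewrite mul1l, mul1r; reflexivity.
  - rewrite <- Z.add_1_r, !zpow_succ, conj_mul, IHa; reflexivity.
  - rewrite <- Z.sub_1_r, !zpow_pred, conj_mul, conj_inv, IHa; reflexivity.
Qed.

Lemma conj_zpow_shift g u d b :
  central d -> conj g u = u ⋅ d -> conj (zpow g b) u = u ⋅ zpow d b.
Proof.
  intros Hd Eg; induction b using Z.peano_ind.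
  - rewrite !zpow0, conj1, mul1r; reflexivity.
  - rewrite <- Z.add_1_r, !zpow_succ, conjM, IHb, conj_mul, Eg,
      (conj_central g _ (central_zpow d b Hd)), <- mulA, (Hd (zpow d b)).
    reflexivity.
  - assert (EV : conj (inv g) u = u ⋅ inv d).
    { rewrite <- (conjVK g u) at 2; rewrite Eg, conj_mul, (conj_central _ d Hd), mulKV.
      reflexivity. }
    rewrite <- Z.sub_1_r, !zpow_pred, conjM, IHb, conj_mul, EV,
      (conj_central _ _ (central_zpow d b Hd)), <- mulA,
      (central_inv d Hd (zpow d b)).
    reflexivity.
Qed.

Section CentralCommutator.
Variables x y : T.
Local Notation c := [~ x, y].
Hypothesis Hc : central c.

Lemma conj_y_x : conj y x = x ⋅ c.
Proof. unfold conj, comm; rewrite !mulA, mulVr, mul1l; reflexivity. Qed.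

Lemma zpow_x_y_swap a b : zpow x a ⋅ zpow y b = zpow y b ⋅ zpow x a ⋅ zpow c (b * a).
Proof.
  assert (E : conj (zpow y b) (zpow x a) = zpow x a ⋅ zpow c (b * a)).
  { rewrite conj_zpow, (conj_zpow_shift y x c b Hc conj_y_x),
      zpow_mul_central, <- zpowM by (apply central_zpow, Hc).
    reflexivity. }
  unfold conj in E; rewrite <- mulA, <- E, !mulA, mulVr, mul1l; reflexivity.
Qed.

Definition word (a b k : Z) : T := zpow x a ⋅ zpow y b ⋅ zpow c k.

Lemma zpow_y_x_swap a b : zpow y b ⋅ zpow x a = zpow x a ⋅ zpow y b ⋅ zpow c (- (b * a)).
Proof.
  rewrite zpow_x_y_swap, <- mulA, <- zpowD, Z.add_opp_diag_r, zpow0, mul1r.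
  reflexivity.
Qed.

Lemma word_mul a b k a' b' k' :
  word a b k ⋅ word a' b' k' = word (a + a') (b + b') (k + k' - b * a').
Proof.
  unfold word; rewrite !mulA.
  rewrite (central_swap _ (zpow c k) (zpow x a') (central_zpow c k Hc)),
    (central_swap _ (zpow c k) (zpow y b') (central_zpow c k Hc)).
  rewrite <- (mulA (zpow x a)), zpow_y_x_swap, !mulA, <- (zpowD x).
  rewrite (central_swap _ (zpow c _) (zpow y b') (central_zpow c _ Hc)),
    <- (mulA _ (zpow y b)), <- (zpowD y).
  rewrite <- !mulA, <- !zpowD.
  do 3 f_equal; lia.
Qed.

Lemma word0 : word 0 0 0 = one.
Proof. unfold word; rewrite !zpow0, !mul1l; reflexivity. Qed.
Lemma word_x a : word a 0 0 = zpow x a.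
Proof. unfold word; rewrite !zpow0, !mul1r; reflexivity. Qed.
Lemma word_y b : word 0 b 0 = zpow y b.
Proof. unfold word; rewrite !zpow0, mul1l, mul1r; reflexivity. Qed.
Lemma word_c k : word 0 0 k = zpow c k.
Proof. unfold word; rewrite !zpow0, !mul1l; reflexivity. Qed.

Lemma word_inv a b k : inv (word a b k) = word (- a) (- b) (- k - a * b).
Proof. symmetry; apply inv_unique; rewrite word_mul, <- word0; f_equal; lia. Qed.

Lemma word_eq a b k k' : word a b k = word a b k' <-> zpow c (k - k') = one.
Proof.
  unfold word; split; intro E.
  - apply zpow_sub_eq_one; exact (mul_cancel_l _ _ _ E).
  - replace k with (k' + (k - k')) by lia; rewrite zpowD, E, mul1r; reflexivity.
Qed.

Lemma word_commute a b k a' b' k' :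
  word a b k ⋅ word a' b' k' = word a' b' k' ⋅ word a b k <->
  zpow c (a * b' - a' * b) = one.
Proof.
  rewrite !word_mul, (Z.add_comm a'), (Z.add_comm b'), word_eq.
  replace (k + k' - b * a' - (k' + k - b' * a)) with (a * b' - a' * b) by ring.
  reflexivity.
Qed.

Lemma word_central a b k : central (word a b k) -> zpow c a = one /\ zpow c b = one.
Proof.
  intro Hw; split.
  - assert (E := proj1 (word_commute a b k 0 1 0) (Hw _)).
    replace (a * 1 - 0 * b) with a in E by ring; exact E.
  - assert (E := proj1 (word_commute 1 0 0 a b k) (eq_sym (Hw _))).
    replace (1 * b - a * 0) with b in E by ring; exact E.
Qed.

Lemma word_y_pow b k t : zpow (word 0 b k) t = word 0 (b * t) (k * t).
Proof.
  unfold word; rewrite !zpow0, !mul1l, zpow_mul_central, <- !zpowM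
    by (apply central_zpow, Hc).
  reflexivity.
Qed.

Lemma word_x_pow a k t : zpow (word a 0 k) t = word (a * t) 0 (k * t).
Proof.
  unfold word; rewrite !zpow0, !mul1r, zpow_mul_central, <- !zpowM
    by (apply central_zpow, Hc).
  reflexivity.
Qed.

(* Modulo <c>: x^(pq) = y^(sq) = x^(rs) and y^(pq) = x^(rp) = y^(sr). *)
Lemma zpow_det_in_comm p q r s k1 k2 :
  zpow x p = word 0 s k1 -> zpow y q = word r 0 k2 ->
  (exists K, zpow x (p * q - r * s) = zpow c K) /\
  (exists K, zpow y (p * q - r * s) = zpow c K).
Proof.
  intros Ex Ey; split.
  - exists (k2 * s + k1 * q); rewrite <- word_x, <- word_c.
    assert (Epq : word (p * q) 0 0 = word (r * s) 0 (k2 * s + k1 * q)).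
    { rewrite word_x, zpowM, Ex, word_y_pow.
      transitivity (word 0 (q * s) 0 ⋅ word 0 0 (k1 * q)).
      - rewrite word_mul; f_equal; lia.
      - rewrite word_y, zpowM, Ey, word_x_pow, word_mul; f_equal; lia. }
    transitivity (word (- (r * s)) 0 0 ⋅ word (p * q) 0 0).
    + rewrite word_mul; f_equal; lia.
    + rewrite Epq, word_mul; f_equal; lia.
  - exists (k1 * r + k2 * p); rewrite <- word_y, <- word_c.
    assert (Eqp : word 0 (p * q) 0 = word 0 (r * s) (k1 * r + k2 * p)).
    { rewrite word_y, Z.mul_comm, zpowM, Ey, word_x_pow.
      transitivity (word (p * r) 0 0 ⋅ word 0 0 (k2 * p)).
      - rewrite word_mul; f_equal; lia.
      - rewrite word_x, zpowM, Ex, word_y_pow, word_mul; f_equal; lia. }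
    transitivity (word 0 (- (r * s)) 0 ⋅ word 0 (p * q) 0).
    + rewrite word_mul; f_equal; lia.
    + rewrite Eqp, word_mul; f_equal; lia.
Qed.

Definition words (N M L : Z) : T -> Prop :=
  fun g => exists a b k, g = word (N * a) (M * b) (L * k).

Lemma words_subgroup N M L t : N * M = L * t -> is_subgroup mul one inv (words N M L).
Proof.
  intro Ht; split; [|split].
  - exists 0, 0, 0; rewrite !Z.mul_0_r, word0; reflexivity.
  - intros g h [a [b [k ->]]] [a' [b' [k' ->]]].
    exists (a + a'), (b + b'), (k + k' - t * b * a').
    rewrite word_mul; f_equal; [lia|lia|].
    transitivity (L * k + L * k' - (N * M) * b * a'); [ring|rewrite Ht; ring].
  - intros g [a [b [k ->]]]; exists (- a), (- b), (- k - t * a * b).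
    rewrite word_inv; f_equal; [lia|lia|].
    transitivity (- (L * k) - (N * M) * a * b); [ring|rewrite Ht; ring].
Qed.

Lemma words_nonabelian N M L : zpow c (N * M) <> one -> ~ abelian_set mul (words N M L).
Proof.
  intros Hne Hab; apply Hne.
  assert (E : word N 0 0 ⋅ word 0 M 0 = word 0 M 0 ⋅ word N 0 0).
  { apply Hab; [exists 1, 0, 0|exists 0, 1, 0]; f_equal; lia. }
  apply word_commute in E; replace (N * M - 0 * 0) with (N * M) in E by ring; exact E.
Qed.

Lemma zpow_x_centralizes_words N M L o :
  zpow c o = one -> centralizer mul (words N M L) (zpow x o).
Proof.
  intros Ho h [a [b [k ->]]]; rewrite <- word_x; apply word_commute.
  replace (o * (M * b) - N * a * 0) with (o * (M * b)) by ring.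
  apply zpow_multiple_one, Ho.
Qed.

Lemma zpow_y_centralizes_words N M L o :
  zpow c o = one -> centralizer mul (words N M L) (zpow y o).
Proof.
  intros Ho h [a [b [k ->]]]; rewrite <- word_y; apply word_commute.
  replace (0 * (M * b) - N * a * o) with (o * - (N * a)) by ring.
  apply zpow_multiple_one, Ho.
Qed.

Lemma words_finite m o :
  0 < m -> 0 < o -> zpow x m = one -> zpow y m = one -> zpow c o = one ->
  finite_on (words 1 1 1).
Proof.
  intros Hm Ho Ex Ey Ec.
  exists (flat_map (fun a => flat_map (fun b => map (word a b) (zrange o))
                                      (zrange m)) (zrange m)).
  intros g [a [b [k ->]]]; rewrite !Z.mul_1_l.
  assert (E : word a b k = word (a mod m) (b mod m) (k mod o)).
  { unfold word; rewrite <- (zpow_mod x m a), <- (zpow_mod y m b), <- (zpow_mod c o k);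
      auto. }
  rewrite E; apply in_flat_map; exists (a mod m); split; [apply in_zrange_mod, Hm|].
  apply in_flat_map; exists (b mod m); split; [apply in_zrange_mod, Hm|].
  apply in_map, in_zrange_mod, Ho.
Qed.

Hypothesis Hself : forall H : T -> Prop, is_subgroup mul one inv H ->
  ~ abelian_set mul H -> forall g, centralizer mul H g -> H g.
Hypothesis Hc1 : c <> one.

(* If c^4 <> 1, c centralizes the non-abelian <x^2, y^2, c^4>, so c = x^(2a) y^(2b) c^(4k),
   and centrality of this word gives c^(2a) = c^(2b) = 1. *)
Lemma comm_torsion : exists n, n <> 0 /\ zpow c n = one.
Proof.
  destruct (classic (zpow c 4 = one)) as [H4|H4]; [exists 4; split; [lia|exact H4]|].
  assert (Hin : words 2 2 4 c).
  { apply Hself; [apply (words_subgroup 2 2 4 1); reflexivity|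
                  apply words_nonabelian, H4|].
    intros h _; apply Hc. }
  destruct Hin as [a [b [k Hk]]].
  assert (Hw : central (word (2 * a) (2 * b) (4 * k))) by (rewrite <- Hk; exact Hc).
  destruct (word_central _ _ _ Hw) as [Ha Hb].
  destruct (Z.eq_dec a 0) as [->|Ha0]; [|exists (2 * a); split; [lia|exact Ha]].
  destruct (Z.eq_dec b 0) as [->|Hb0]; [|exists (2 * b); split; [lia|exact Hb]].
  exists (1 - 4 * k); split; [lia|].
  apply zpow_sub_eq_one; rewrite zpow1, <- word_c; exact Hk.
Qed.

Lemma comm_order : exists o, 2 <= o /\ zpow c o = one.
Proof.
  destruct comm_torsion as [n [Hn0 Hn]].
  exists (Z.abs n); split; [|apply zpow_abs_one, Hn].
  enough (Z.abs n <> 1) by lia.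
  intro H1; apply Hc1; rewrite <- (zpow1 c), <- H1; apply zpow_abs_one, Hn.
Qed.

(* With N = o + 1 we have c^(N^2) = c, so <x^N, y^N, c> is non-abelian and contains
   x^o and y^o; the resulting relations modulo <c> have determinant 1 modulo N. *)
Lemma generators_torsion : exists m, 0 < m /\ zpow x m = one /\ zpow y m = one.
Proof.
  destruct comm_order as [o [Ho2 Ho]].
  set (N := 1 + o).
  assert (HS : is_subgroup mul one inv (words N N 1))
    by (apply (words_subgroup N N 1 (N * N)); ring).
  assert (HNab : ~ abelian_set mul (words N N 1)).
  { apply words_nonabelian.
    replace (N * N) with (1 + o * (2 + o)) by (unfold N; ring).
    rewrite zpowD, zpow_multiple_one, zpow1, mul1r by exact Ho; exact Hc1. }
  destruct (Hself _ HS HNab _ (zpow_x_centralizes_words N N 1 o Ho)) as [a1 [b1 [k1 E1]]].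
  destruct (Hself _ HS HNab _ (zpow_y_centralizes_words N N 1 o Ho)) as [a2 [b2 [k2 E2]]].
  assert (Dx : zpow x (o - N * a1) = word 0 (N * b1) k1).
  { rewrite <- word_x; transitivity (word (- (N * a1)) 0 0 ⋅ word o 0 0).
    - rewrite word_mul; f_equal; lia.
    - rewrite (word_x o), E1, word_mul; f_equal; lia. }
  assert (Dy : zpow y (o - N * b2) = word (N * a2) 0 k2).
  { rewrite <- word_y; transitivity (word 0 o 0 ⋅ word 0 (- (N * b2)) 0).
    - rewrite word_mul; f_equal; lia.
    - rewrite (word_y o), E2, word_mul; f_equal; lia. }
  destruct (zpow_det_in_comm _ _ _ _ _ _ Dx Dy) as [[K1 Xd] [K2 Yd]].
  set (d := (o - N * a1) * (o - N * b2) - N * a2 * (N * b1)) in *.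
  assert (Hd : d <> 0).
  { replace d with (1 + N * (N * (1 - a1) * (1 - b2) - (1 - a1) - (1 - b2) - N * a2 * b1))
      by (unfold d, N; ring).
    apply succ_multiple_neq0; unfold N; lia. }
  exists (Z.abs (d * o)); split; [lia|split]; apply zpow_abs_one;
    eapply zpow_order_from; eassumption.
Qed.

Lemma self_centralizing_finite_subgroup :
  exists H, finite_on H /\ forall g, centralizer mul H g -> H g.
Proof.
  destruct comm_order as [o [Ho2 Ho]].
  destruct generators_torsion as [m [Hm [Ex Ey]]].
  exists (words 1 1 1); split; [exact (words_finite m o Hm ltac:(lia) Ex Ey Ho)|].
  apply Hself; [apply (words_subgroup 1 1 1 1); reflexivity|].
  apply words_nonabelian; rewrite zpow1; exact Hc1.
Qed.

End CentralCommutator.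

Lemma upper_central_finite (H : T -> Prop) :
  finite_on H -> (forall g, centralizer mul H g -> H g) ->
  forall i, finite_on (upper_central mul one inv i).
Proof.
  intros [lH HlH] Hcent i; induction i as [|i [lZ HlZ]].
  - exists (one :: nil); intros g Hg; left; symmetry; exact Hg.
  - apply (finite_on_fibers _ (fun g => map (fun h => [~ g, h]) lH)
             (tuples lZ (length lH)) (fun g => map (fun h => h ⋅ g) lH)).
    + intros g Hg; rewrite <- (length_map (fun h => [~ g, h]) lH).
      apply tuples_complete; intros a Ha; apply in_map_iff in Ha.
      destruct Ha as [h [<- _]]; apply HlZ, Hg.
    + intros g g' _ _ E; apply in_map_iff; exists (g' ⋅ inv g); split; [apply mulVK|].
      apply HlH, Hcent; intros h Hh.
      apply comm_eq_commute, (proj1 map_ext_in_iff E), HlH, Hh.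
Qed.

Lemma upper_central_sub_center :
  (forall a b, central [~ a, b] -> [~ a, b] = one) ->
  forall i v, upper_central mul one inv i v -> central v.
Proof.
  intros Hno i; induction i as [|i IH]; intros v Hv g; simpl in Hv.
  - rewrite Hv, mul1l, mul1r; reflexivity.
  - apply comm_eq_one, Hno, IH, Hv.
Qed.

End Group.

Theorem theorem3p1 (T : Type) (mul : T -> T -> T) (one : T) (inv : T -> T)
  (HG : is_group mul one inv)
  (Hnil : nilpotent_group mul one inv)
  (HA : forall H : T -> Prop, is_subgroup mul one inv H -> ~ abelian_set mul H ->
        forall g, centralizer mul H g -> H g) :
  abelian_group mul \/ finite_group T.
Proof.
  destruct Hnil as [n Hn].
  destruct (classic (exists x y, central T mul (comm mul inv x y) /\ comm mul inv x y <> one))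
    as [[x [y [Hc Hc1]]]|Hab].
  - right.
    destruct (self_centralizing_finite_subgroup T mul one inv HG x y Hc HA Hc1)
      as [H [HHfin Hcent]].
    destruct (upper_central_finite T mul one inv HG H HHfin Hcent n) as [l Hl].
    exists l; intro g; apply Hl, Hn.
  - left; intros a b.
    refine (upper_central_sub_center T mul one inv HG _ n a (Hn a) b).
    intros u v Huv; apply NNPP; intro Hne; apply Hab; exists u, v; auto.
Qed.
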